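(* Let $V$ be a finite-dimensional real vector space, $\phi\in\mathrm{End}(V)\setminus\{0\}$ and $W=\mathrm{im}(\phi)$. Then the map \[V^*\oplus C_{sl}(W)\to\mathcal{Q}(\mathfrak{g}_\phi),\quad(\alpha,c)\mapsto\zeta_{\alpha,c}\] is a linear isomorphism, where $\zeta_{\alpha,c}(v,t)=c(\phi(v)/t)\,t+\alpha(v)$ for $t\ne 0$ and $\zeta_{\alpha,c}(v,0)=\alpha(v)$. In particular $\mathcal{Q}(\mathfrak{g}_\phi)$ is infinite-dimensional.
   Context: $\mathfrak{g}_\phi$ is $V\times\mathbb{R}$ with bracket $[(v,s),(w,t)]=(s\phi(w)-t\phi(v),0)$. $\mathcal{Q}(\mathfrak{g}_\phi)$ is the space of continuous Lie quasi-states, i.e. continuous $\zeta:\mathfrak{g}_\phi\to\mathbb{R}$ with $\zeta(aX+bY)=a\zeta(X)+b\zeta(Y)$ for all $a,b\in\mathbb{R}$ and commuting $X,Y$. $C_{sl}(W)$ is the space of continuous sublinear functions $c:W\to\mathbb{R}$, i.e. $c(w)/\|w\|\to 0$ as $w\to\infty$. *)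

From Stdlib Require Import Reals.
From mathcomp Require Import ssreflect ssrfun ssrbool eqtype ssrnat fintype bigop.
Set Implicit Arguments.
Unset Strict Implicit.
Open Scope R_scope.

(* V = R^n (any finite-dimensional real vector space, in coordinates). *)
Definition V (n : nat) := 'I_n -> R.

Definition vadd n (v w : V n) : V n := fun i => v i + w i.
Definition vsub n (v w : V n) : V n := fun i => v i - w i.
Definition vscale n (a : R) (v : V n) : V n := fun i => a * v i.
Definition vzero n : V n := fun _ => 0%R.
Arguments vzero n : clear implicits.

(* max norm (all norms on R^n are equivalent) *)
Definition vnorm n (v : V n) : R := \big[Rmax/0%R]_(i < n) Rabs (v i).

Definition is_linear_map n (phi : V n -> V n) : Prop :=
  (forall v w, phi (vadd v w) = vadd (phi v) (phi w)) /\
  (forall a v, phi (vscale a v) = vscale a (phi v)).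

Definition is_dual n (alpha : V n -> R) : Prop :=
  (forall v w, alpha (vadd v w) = alpha v + alpha w) /\
  (forall a v, alpha (vscale a v) = a * alpha v).

Definition W n (phi : V n -> V n) := { w : V n | exists v, phi v = w }.

Definition Wval n (phi : V n -> V n) (w : W phi) : V n := proj1_sig w.

Definition Wof n (phi : V n -> V n) (v : V n) : W phi :=
  exist (fun w => exists v', phi v' = w) (phi v) (@ex_intro (V n) (fun v' => phi v' = phi v) v (@Logic.eq_refl _ (phi v))).

Definition W_continuous n (phi : V n -> V n) (c : W phi -> R) : Prop :=
  forall (w : W phi) (eps : R), 0 < eps -> exists delta, 0 < delta /\
    forall w' : W phi, vnorm (vsub (Wval w') (Wval w)) < delta ->
      Rabs (c w' - c w) < eps.

Definition W_sublinear n (phi : V n -> V n) (c : W phi -> R) : Prop :=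
  forall eps : R, 0 < eps -> exists M : R, forall w : W phi,
    M < vnorm (Wval w) -> Rabs (c w) <= eps * vnorm (Wval w).

Definition is_Csl n (phi : V n -> V n) (c : W phi -> R) : Prop :=
  W_continuous c /\ W_sublinear c.

Definition gphi n := (V n * R)%type.

Definition gadd n (X Y : gphi n) : gphi n := (vadd (fst X) (fst Y), snd X + snd Y).
Definition gscale n (a : R) (X : gphi n) : gphi n := (vscale a (fst X), a * snd X).

Definition gbracket n (phi : V n -> V n) (X Y : gphi n) : gphi n :=
  (vsub (vscale (snd X) (phi (fst Y))) (vscale (snd Y) (phi (fst X))), 0%R).

Definition gzero n : gphi n := (vzero n, 0%R).
Arguments gzero n : clear implicits.

Definition g_continuous n (zeta : gphi n -> R) : Prop :=
  forall (X : gphi n) (eps : R), 0 < eps -> exists delta, 0 < delta /\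
    forall Y : gphi n,
      vnorm (vsub (fst Y) (fst X)) < delta -> Rabs (snd Y - snd X) < delta ->
      Rabs (zeta Y - zeta X) < eps.

Definition is_LQS n (phi : V n -> V n) (zeta : gphi n -> R) : Prop :=
  g_continuous zeta /\
  forall (X Y : gphi n) (a b : R), gbracket phi X Y = gzero n ->
    zeta (gadd (gscale a X) (gscale b Y)) = a * zeta X + b * zeta Y.

(* zeta_{alpha,c}(v,t) = c(phi(v)/t) t + alpha(v) (t <> 0), alpha(v) (t = 0);
   phi(v)/t is written phi(v/t), which is the same vector by linearity. *)
Definition zeta_of n (phi : V n -> V n) (alpha : V n -> R) (c : W phi -> R)
    (X : gphi n) : R :=
  let (v, t) := X in
  match Req_EM_T t 0 with
  | left _ => alpha v
  | right _ => c (Wof phi (vscale (/ t) v)) * t + alpha v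
  end.

(* Two elements (v, s) and (w, t) of g_phi commute iff phi v and phi w are the
   multiples s P and t P of a common P in W, and zeta_{alpha,c} is linear along each
   such ray.  Conversely a quasi-state zeta is recovered from alpha = zeta(., 0) and
   c(phi x) = zeta(x, 1) - zeta(x, 0), which does not depend on the preimage x because
   (k, 0) is central for k in ker phi.  Analytically, continuity of zeta_{alpha,c} at
   t = 0 is the sublinearity of c; conversely c is sublinear because zeta is
   homogeneous and uniformly continuous on (ball) x (t near 0).  Bumps supported near
   the spheres |w| = k + 1 give infinitely many independent quasi-states. *)

From Stdlib Require Import Reals Lra Psatz FunctionalExtensionality ProofIrrelevance IndefiniteDescription List.
From mathcomp Require Import ssreflect ssrfun ssrbool eqtype ssrnat seq fintype bigop.
From mathcomp Require Import ssralg matrix mxalgebra Rstruct.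
Open Scope R_scope.
Set Implicit Arguments.
Unset Strict Implicit.

Ltac vext := apply: functional_extensionality => ?; rewrite /vadd /vsub /vscale /vzero.

Section Norm.
Variable n : nat.
Implicit Types (u v w : V n).

Lemma vnorm_ge0 v : 0 <= vnorm v.
Proof.
rewrite /vnorm; elim/big_ind: _ => [|x y hx _|i _]; first lra.
- exact: Rle_trans hx (Rmax_l _ _).
- exact: Rabs_pos.
Qed.

Lemma vnorm_le v B : 0 <= B -> (forall j, Rabs (v j) <= B) -> vnorm v <= B.
Proof. by move=> hB hj; rewrite /vnorm; elim/big_ind: _ => // x y; apply: Rmax_lub. Qed.

Lemma vnorm_lt v B : 0 < B -> (forall j, Rabs (v j) < B) -> vnorm v < B.
Proof. by move=> hB hj; rewrite /vnorm; elim/big_ind: _ => // x y; apply: Rmax_lub_lt. Qed.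

Lemma coord_le_vnorm v j : Rabs (v j) <= vnorm v.
Proof.
rewrite /vnorm; have: j \in index_enum 'I_n by rewrite mem_index_enum.
elim: (index_enum 'I_n) => // i s IH; rewrite inE big_cons => /orP [/eqP ->|hs].
- exact: Rmax_l.
- exact: Rle_trans (IH hs) (Rmax_r _ _).
Qed.

Lemma vnorm_add_le u v : vnorm (vadd u v) <= vnorm u + vnorm v.
Proof.
apply: vnorm_le => [|j]; first by have := vnorm_ge0 u; have := vnorm_ge0 v; lra.
apply: Rle_trans (Rabs_triang _ _) _.
by have := coord_le_vnorm u j; have := coord_le_vnorm v j; lra.
Qed.

Lemma vnorm_scale_le a v : vnorm (vscale a v) <= Rabs a * vnorm v.
Proof.
apply: vnorm_le => [|j]; first exact: Rmult_le_pos (Rabs_pos _) (vnorm_ge0 _).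
rewrite /vscale Rabs_mult; apply: Rmult_le_compat_l; [exact: Rabs_pos | exact: coord_le_vnorm].
Qed.

Lemma vnorm_scale a v : vnorm (vscale a v) = Rabs a * vnorm v.
Proof.
apply: Rle_antisym; first exact: vnorm_scale_le.
have [->|ha] := Req_dec a 0; first by rewrite Rabs_R0 Rmult_0_l; exact: vnorm_ge0.
have hv : vscale (/ a) (vscale a v) = v by vext; field.
have := vnorm_scale_le (/ a) (vscale a v); rewrite hv Rabs_inv => h.
have hpos := Rabs_pos_lt _ ha.
apply: (Rmult_le_reg_l (/ Rabs a)); first exact: Rinv_0_lt_compat.
by rewrite -Rmult_assoc Rinv_l ?Rmult_1_l; lra.
Qed.

Lemma vnorm_sub_sym u v : vnorm (vsub u v) = vnorm (vsub v u).
Proof.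
have -> : vsub u v = vscale (-1) (vsub v u) by vext; ring.
by rewrite vnorm_scale Rabs_Ropp Rabs_R1 Rmult_1_l.
Qed.

Lemma vnorm_le_sub u v : vnorm u <= vnorm (vsub u v) + vnorm v.
Proof.
have {1}-> : u = vadd (vsub u v) v by vext; ring.
exact: vnorm_add_le.
Qed.

Lemma vnorm_dist_le u v : Rabs (vnorm u - vnorm v) <= vnorm (vsub u v).
Proof.
have := vnorm_le_sub u v; have := vnorm_le_sub v u; rewrite (vnorm_sub_sym v u).
move=> h1 h2; apply: Rabs_le; lra.
Qed.

Lemma vnorm_gt0 v : v <> vzero n -> 0 < vnorm v.
Proof.
move=> hv; have [//|h0] := Rle_lt_or_eq_dec _ _ (vnorm_ge0 v).
case: hv; apply: functional_extensionality => j.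
have := coord_le_vnorm v j; rewrite -h0 /vzero => h.
by have := Rle_abs (v j); have := Rle_abs (- v j); rewrite Rabs_Ropp; lra.
Qed.

End Norm.

Definition list_min {A : Type} (f : A -> R) (l : list A) : R :=
  fold_right (fun x m => Rmin (f x) m) 1 l.

Lemma list_min_gt0 {A : Type} (f : A -> R) l : (forall x, 0 < f x) -> 0 < list_min f l.
Proof. by move=> hf; elim: l => [|a l IH] /=; [lra | apply: Rmin_glb_lt]. Qed.

Lemma list_min_le {A : Type} (f : A -> R) l x : In x l -> list_min f l <= f x.
Proof.
elim: l => [|a l IH] //= [->|h]; first exact: Rmin_l.
exact: Rle_trans (Rmin_r _ _) (IH h).
Qed.

Definition list_max {A : Type} (f : A -> R) (l : list A) : R :=
  fold_right (fun x m => Rmax (f x) m) 0 l.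

Lemma list_max_ge {A : Type} (f : A -> R) l x : In x l -> f x <= list_max f l.
Proof.
elim: l => [|a l IH] //= [->|h]; first exact: Rmax_l.
exact: Rle_trans (IH h) (Rmax_r _ _).
Qed.

Lemma interval_gauge_cover a b (r : R -> R) : (forall t, 0 < r t) ->
  exists ts, forall y, a <= y <= b -> exists t, In t ts /\ Rabs (y - t) < r t.
Proof.
move=> hr.
pose fam x y := a <= x <= b /\ Rabs (y - x) < r x.
have hdom : forall x, (exists y, fam x y) -> a <= x <= b by move=> x [y []].
pose F := mkfamily (fun x => a <= x <= b) fam hdom.
have hF : covering_open_set (fun x => a <= x <= b) F.
  split=> [y hy|x y [hx hy]].
  - by exists y; split; rewrite // Rminus_diag Rabs_R0.
  - have hp : 0 < r x - Rabs (y - x) by lra.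
    exists (mkposreal _ hp) => z; rewrite /disc /= => hz; split=> //.
    have := Rabs_triang (z - y) (y - x).
    have -> : z - y + (y - x) = z - x by ring.
    lra.
have [D [hcov [l hl]]] := compact_P3 a b F hF.
exists l => y hy; have [x [[hx hxy] hDx]] := hcov y hy.
by exists x; split=> //; apply/hl.
Qed.

Definition vcons n (t : R) (y : V n) : V n.+1 :=
  fun j => if unlift ord0 j is Some k then y k else t.

Definition vtail n (v : V n.+1) : V n := fun k => v (lift ord0 k).

(* Heine-Borel, by induction on the dimension from [compact_P3]. *)
Lemma ball_gauge_cover n M (d : V n -> R) : (forall x, 0 < d x) ->
  exists s, forall y, vnorm y <= M -> exists x, In x s /\ vnorm (vsub y x) < d x.
Proof.
elim: n d => [|n IH] d hd.
  exists [:: vzero 0] => y _; exists (vzero 0); split; first by left.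
  by rewrite /vnorm big_ord0; exact: hd.
have fiber : forall t, {s | forall y, vnorm y <= M ->
    exists x, In x s /\ vnorm (vsub y x) < d (vcons t x)}.
  by move=> t; apply: constructive_indefinite_description; apply: IH => x; exact: hd.
pose rho t := list_min (fun x => d (vcons t x)) (sval (fiber t)).
have [ts hts] : exists ts, forall y, - M <= y <= M -> exists t, In t ts /\ Rabs (y - t) < rho t.
  by apply: interval_gauge_cover => t; apply: list_min_gt0 => x; exact: hd.
exists (flat_map (fun t => map (vcons t) (sval (fiber t))) ts) => y hy.
have [t [hts' hyt]] : exists t, In t ts /\ Rabs (y ord0 - t) < rho t.
  apply: hts; have := coord_le_vnorm y ord0.
  have := Rle_abs (y ord0); have := Rle_abs (- y ord0); rewrite Rabs_Ropp; lra.
have [x [hx hxy]] : exists x, In x (sval (fiber t)) /\ vnorm (vsub (vtail y) x) < d (vcons t x).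
  apply: (svalP (fiber t)); apply: vnorm_le => [|j]; first exact: Rle_trans (vnorm_ge0 y) hy.
  exact: Rle_trans (coord_le_vnorm y _) hy.
exists (vcons t x); split; first by apply/in_flat_map; exists t; split=> //; apply: in_map.
apply: vnorm_lt => [|j]; first exact: hd.
rewrite /vsub /vcons; case: unliftP => [k ->|->].
- exact: Rle_lt_trans (coord_le_vnorm (vsub (vtail y) x) k) hxy.
- exact: Rlt_le_trans hyt (list_min_le _ hx).
Qed.

Definition unitv n (i : 'I_n) : V n := fun j => if j == i then 1 else 0.

Lemma vsum_apply n m (F : 'I_m -> V n) j :
  (\big[@vadd n/vzero n]_(i < m) F i) j = \big[Rplus/0]_(i < m) F i j.
Proof. exact: (big_morph (fun u : V n => u j)). Qed.

Lemma vdecomp n (v : V n) : v = \big[@vadd n/vzero n]_(i < n) vscale (v i) (unitv i).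
Proof.
apply: functional_extensionality => j; rewrite vsum_apply (bigD1 j) //= big1.
- by rewrite /vscale /unitv eqxx; ring.
- by move=> i /negbTE; rewrite /vscale /unitv eq_sym => ->; ring.
Qed.

Lemma vscale0 n (v : V n) : vscale 0 v = vzero n.
Proof. by vext; ring. Qed.

Lemma linear_map_coord n (phi : V n -> V n) : is_linear_map phi ->
  forall v j, phi v j = \big[Rplus/0]_(i < n) (v i * phi (unitv i) j).
Proof.
move=> [hadd hscale] v j.
have h0 : phi (vzero n) = vzero n by rewrite -{1}(vscale0 (vzero n)) hscale vscale0.
rewrite {1}(vdecomp v) (big_morph phi hadd h0) vsum_apply.
by apply: eq_bigr => i _; rewrite hscale.
Qed.

Lemma dual_coord n (alpha : V n -> R) : is_dual alpha ->
  forall v, alpha v = \big[Rplus/0]_(i < n) (v i * alpha (unitv i)).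
Proof.
move=> [hadd hscale] v.
have h0 : alpha (vzero n) = 0 by rewrite -{1}(vscale0 (vzero n)) hscale; ring.
rewrite {1}(vdecomp v) (big_morph alpha hadd h0).
by apply: eq_bigr => i _; rewrite hscale.
Qed.

Lemma sum_ge0 m (g : 'I_m -> R) : (forall i, 0 <= g i) -> 0 <= \big[Rplus/0]_(i < m) g i.
Proof. by move=> h; elim/big_ind: _ => [|x y|i _]; [lra | lra | exact: h]. Qed.

Lemma sum_ge_term m (g : 'I_m -> R) j :
  (forall i, 0 <= g i) -> g j <= \big[Rplus/0]_(i < m) g i.
Proof.
move=> h; rewrite (bigD1 j) //= -{1}(Rplus_0_r (g j)); apply: Rplus_le_compat_l.
by elim/big_ind: _ => [|x y|i _]; [lra | lra | exact: h].
Qed.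

Lemma abs_sum_mul_le n (v : V n) (m : 'I_n -> R) :
  Rabs (\big[Rplus/0]_(i < n) (v i * m i)) <= vnorm v * \big[Rplus/0]_(i < n) Rabs (m i).
Proof.
apply: (big_ind2 (fun x y => Rabs x <= vnorm v * y)).
- by rewrite Rabs_R0 Rmult_0_r; lra.
- by move=> x1 x2 y1 y2 h1 h2; apply: Rle_trans (Rabs_triang _ _) _; lra.
- move=> i _; rewrite Rabs_mult; apply: Rmult_le_compat_r; first exact: Rabs_pos.
  exact: coord_le_vnorm.
Qed.

Definition matmap n (m : 'I_n -> 'I_n -> R) (v : V n) : V n :=
  fun j => \big[Rplus/0]_(i < n) (v i * m i j).

Definition matbound n (m : 'I_n -> 'I_n -> R) : R :=
  \big[Rplus/0]_(j < n) \big[Rplus/0]_(i < n) Rabs (m i j).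

Lemma matbound_ge0 n (m : 'I_n -> 'I_n -> R) : 0 <= matbound m.
Proof. by apply: sum_ge0 => j; apply: sum_ge0 => i; exact: Rabs_pos. Qed.

Lemma matmap_bound n (m : 'I_n -> 'I_n -> R) v : vnorm (matmap m v) <= matbound m * vnorm v.
Proof.
apply: vnorm_le => [|j]; first exact: Rmult_le_pos (matbound_ge0 m) (vnorm_ge0 v).
apply: Rle_trans (abs_sum_mul_le _ _) _; rewrite Rmult_comm.
apply: Rmult_le_compat_r; first exact: vnorm_ge0.
apply: (@sum_ge_term n (fun j => \big[Rplus/0]_(i < n) Rabs (m i j))) => k.
by apply: sum_ge0 => i; exact: Rabs_pos.
Qed.

Lemma matmap_vsub n (m : 'I_n -> 'I_n -> R) u v :
  matmap m (vsub u v) = vsub (matmap m u) (matmap m v).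
Proof.
apply: functional_extensionality => j; rewrite /matmap /vsub.
have <- : \big[Rplus/0]_(i < n) (u i * m i j + - (v i * m i j)) =
          \big[Rplus/0]_(i < n) (u i * m i j) - \big[Rplus/0]_(i < n) (v i * m i j).
  by rewrite big_split /= -(big_morph Ropp Ropp_plus_distr Ropp_0).
by apply: eq_bigr => i _; ring.
Qed.

Lemma dual_bound n (alpha : V n -> R) : is_dual alpha ->
  exists La, 0 <= La /\ forall v, Rabs (alpha v) <= La * vnorm v.
Proof.
move=> hd; exists (\big[Rplus/0]_(i < n) Rabs (alpha (unitv i))); split.
- by apply: sum_ge0 => i; exact: Rabs_pos.
- by move=> v; rewrite dual_coord // Rmult_comm; exact: abs_sum_mul_le.
Qed.

Lemma small_enough K eps : 0 <= K -> 0 < eps ->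
  exists d, 0 < d /\ forall x, Rabs x <= d -> K * Rabs x < eps.
Proof.
move=> hK heps; exists (eps / (K + 1)); split; first by apply: Rdiv_lt_0_compat; lra.
move=> x hx; apply: Rle_lt_trans (Rmult_le_compat_l _ _ _ hK hx) _.
apply: (Rmult_lt_reg_r (K + 1)); first lra.
by rewrite Rmult_assoc /Rdiv Rmult_assoc Rinv_l; nra.
Qed.

Definition vcontinuous n (f : V n -> R) : Prop :=
  forall x eps, 0 < eps -> exists delta, 0 < delta /\
    forall y, vnorm (vsub y x) < delta -> Rabs (f y - f x) < eps.

Lemma vcontinuous_plus n (f g : V n -> R) :
  vcontinuous f -> vcontinuous g -> vcontinuous (fun x => f x + g x).
Proof.
move=> hf hg x eps heps.
have he2 : 0 < eps / 2 by lra.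
have [d1 [hd1 h1]] := hf x _ he2; have [d2 [hd2 h2]] := hg x _ he2.
exists (Rmin d1 d2); split=> [|y hy]; first exact: Rmin_glb_lt.
have := h1 y (Rlt_le_trans _ _ _ hy (Rmin_l _ _)).
have := h2 y (Rlt_le_trans _ _ _ hy (Rmin_r _ _)).
have := Rabs_triang (f y - f x) (g y - g x).
have -> : f y - f x + (g y - g x) = f y + g y - (f x + g x) by ring.
lra.
Qed.

Lemma lipschitz_vcontinuous n (f : V n -> R) L :
  0 <= L -> (forall x y, Rabs (f y - f x) <= L * vnorm (vsub y x)) -> vcontinuous f.
Proof.
move=> hL hf x eps heps; have [d [hd hsmall]] := small_enough hL heps.
exists d; split=> // y hy; apply: Rle_lt_trans (hf x y) _.
rewrite -(Rabs_pos_eq (vnorm _) (vnorm_ge0 _)); apply: hsmall.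
by rewrite Rabs_pos_eq; [lra | exact: vnorm_ge0].
Qed.

Lemma dual_vcontinuous n (alpha : V n -> R) : is_dual alpha -> vcontinuous alpha.
Proof.
move=> hd; have [La [hLa hbound]] := dual_bound hd.
apply: (lipschitz_vcontinuous hLa) => x y; apply: Rle_trans (hbound _).
have -> : alpha (vsub y x) = alpha (vadd y (vscale (-1) x)) by congr alpha; vext; ring.
by rewrite (proj1 hd) (proj2 hd); apply: Req_le; congr Rabs; ring.
Qed.

Lemma vcontinuous_bounded_on_ball n (f : V n -> R) : vcontinuous f ->
  forall M, exists C, forall y, vnorm y <= M -> Rabs (f y) <= C.
Proof.
move=> hf M.
have gauge : forall x, {d | 0 < d /\ forall y, vnorm (vsub y x) < d -> Rabs (f y - f x) < 1}.
  by move=> x; apply: constructive_indefinite_description; exact: hf x 1 Rlt_0_1.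
have [s hs] := ball_gauge_cover M (fun x => proj1 (svalP (gauge x))).
exists (list_max (fun x => Rabs (f x) + 1) s) => y hy.
have [x [hx hyx]] := hs y hy.
have := proj2 (svalP (gauge x)) y hyx; have := list_max_ge (fun x => Rabs (f x) + 1) hx.
have := Rabs_triang_inv (f y) (f x); lra.
Qed.

Section LinearMap.
Variables (n : nat) (phi : V n -> V n).
Hypothesis phi_lin : is_linear_map phi.

Lemma phi_vscale a v : phi (vscale a v) = vscale a (phi v).
Proof. exact: (proj2 phi_lin). Qed.

Lemma phi_vsub u v : phi (vsub u v) = vsub (phi u) (phi v).
Proof.
have -> : vsub u v = vadd u (vscale (-1) v) by vext; ring.
by rewrite (proj1 phi_lin) phi_vscale; vext; ring.
Qed.

Lemma phi_matmap : phi = matmap (fun i j => phi (unitv i) j).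
Proof.
by apply: functional_extensionality => v; apply: functional_extensionality => j;
  exact: linear_map_coord.
Qed.

Lemma phi_lipschitz : exists L, 0 <= L /\ forall x, vnorm (phi x) <= L * vnorm x.
Proof.
exists (matbound (fun i j => phi (unitv i) j)); split=> [|x]; first exact: matbound_ge0.
by rewrite {1}phi_matmap; exact: matmap_bound.
Qed.

Definition rowv (v : V n) : 'rV[R]_n := \row_j v j.

Definition phi_matrix : 'M[R]_n := \matrix_(i, j) phi (unitv i) j.

Lemma matmap_mx (A : 'M[R]_n) v j : matmap (fun i j => A i j) v j = (rowv v *m A)%R ord0 j.
Proof. by rewrite /matmap !mxE; apply: eq_bigr => i _; rewrite mxE. Qed.

Lemma rowv_phi v : rowv (phi v) = (rowv v *m phi_matrix)%R.
Proof.
apply/matrixP => i j; rewrite (ord1 i) -matmap_mx mxE phi_matmap.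
by apply: eq_bigr => k _; rewrite mxE.
Qed.

(* A linear right inverse of [phi] on its image, from the pseudo-inverse matrix. *)
Definition pinv_map : V n -> V n := matmap (fun i j => pinvmx phi_matrix i j).

Lemma phi_pinv_map v : phi (pinv_map (phi v)) = phi v.
Proof.
have hrow : rowv (pinv_map (phi v)) = (rowv (phi v) *m pinvmx phi_matrix)%R.
  by apply/matrixP => i j; rewrite (ord1 i) -matmap_mx mxE.
apply: functional_extensionality => j.
have -> : phi (pinv_map (phi v)) j = rowv (phi (pinv_map (phi v))) ord0 j by rewrite mxE.
rewrite rowv_phi hrow mulmxKpV; first by rewrite mxE.
by rewrite rowv_phi submxMl.
Qed.

Lemma pinv_map_vsub u v : pinv_map (vsub u v) = vsub (pinv_map u) (pinv_map v).
Proof. exact: matmap_vsub. Qed.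

Lemma pinv_map_lipschitz : exists K, 0 <= K /\ forall x, vnorm (pinv_map x) <= K * vnorm x.
Proof. by exists (matbound (fun i j => pinvmx phi_matrix i j)); split; [exact: matbound_ge0 | exact: matmap_bound]. Qed.

Lemma Wval_inj : injective (@Wval n phi).
Proof. by case=> x1 p1 [x2 p2] /= e; subst x2; rewrite (proof_irrelevance _ p1 p2). Qed.

Lemma Wof_pinv_map w : Wof phi (pinv_map (Wval w)) = w.
Proof. by apply: Wval_inj; case: w => x [v hv] /=; subst x; exact: phi_pinv_map. Qed.

Lemma W_continuous_Wof (c : W phi -> R) :
  W_continuous c -> vcontinuous (fun x => c (Wof phi x)).
Proof.
move=> hc x eps heps; have [L [hL hphi]] := phi_lipschitz.
have [dc [hdc H]] := hc (Wof phi x) eps heps.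
have [d [hd hsmall]] := small_enough hL hdc.
exists d; split=> // y hy; apply: H => /=; rewrite -phi_vsub.
apply: Rle_lt_trans (hphi _) _; rewrite -(Rabs_pos_eq _ (vnorm_ge0 (vsub y x))).
by apply: hsmall; rewrite Rabs_pos_eq; [lra | exact: vnorm_ge0].
Qed.

Lemma W_continuous_bounded (c : W phi -> R) : W_continuous c ->
  forall M, exists C, forall w, vnorm (Wval w) <= M -> Rabs (c w) <= C.
Proof.
move=> hc M; have [K [hK hpinv]] := pinv_map_lipschitz.
have [C hC] := vcontinuous_bounded_on_ball (W_continuous_Wof hc) (K * Rabs M).
exists C => w hw; rewrite -(Wof_pinv_map w); apply: hC.
apply: Rle_trans (hpinv _) (Rmult_le_compat_l _ _ _ hK _).
exact: Rle_trans hw (Rle_abs M).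
Qed.

Lemma Csl_affine_bound (c : W phi -> R) : is_Csl c ->
  forall eps, 0 < eps -> exists C, 0 <= C /\ forall w, Rabs (c w) <= eps * vnorm (Wval w) + C.
Proof.
move=> [hc hsl] eps heps; have [M hM] := hsl eps heps.
have [C hC] := W_continuous_bounded hc M.
exists (Rabs C); split=> [|w]; first exact: Rabs_pos.
have hw := vnorm_ge0 (Wval w); have := Rabs_pos C; have := Rle_abs C.
have [/hM|/hC] := Rlt_le_dec M (vnorm (Wval w)); nra.
Qed.

End LinearMap.

(* [v'/t' - v/t = (v' - v)/t' + (t - t') v/(t t')] with [|t'| >= |t|/2]. *)
Lemma vscale_inv_continuous n (v : V n) t : t <> 0 ->
  forall eta, 0 < eta -> exists delta, 0 < delta /\ delta <= Rabs t / 2 /\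
    forall v' t', vnorm (vsub v' v) < delta -> Rabs (t' - t) < delta ->
      vnorm (vsub (vscale (/ t') v') (vscale (/ t) v)) < eta.
Proof.
move=> ht eta heta; have hT := Rabs_pos_lt _ ht; have hN := vnorm_ge0 v.
have hiT : 0 < / Rabs t by exact: Rinv_0_lt_compat.
have hK : 0 <= 2 * / Rabs t * (1 + vnorm v * / Rabs t).
  by apply: Rmult_le_pos; [lra | have := Rmult_le_pos _ _ hN (Rlt_le _ _ hiT); lra].
have [d [hd hsmall]] := small_enough hK heta.
exists (Rmin (Rabs t / 2) d); split; first by apply: Rmin_glb_lt; lra.
split=> [|v' t' hv' ht']; first exact: Rmin_l.
have hd1 := Rmin_l (Rabs t / 2) d; have hd2 := Rmin_r (Rabs t / 2) d.
set delta := Rmin (Rabs t / 2) d in hd1 hd2 hv' ht'.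
have hT' : Rabs t / 2 <= Rabs t'.
  have := Rabs_triang_inv t (t - t'); rewrite Rabs_minus_sym.
  have -> : t - (t - t') = t' by ring.
  lra.
have ht'0 : t' <> 0 by move=> e; rewrite e Rabs_R0 in hT'; lra.
have -> : vsub (vscale (/ t') v') (vscale (/ t) v) =
          vadd (vscale (/ t') (vsub v' v)) (vscale ((t - t') * / t * / t') v).
  by vext; field.
apply: Rle_lt_trans (vnorm_add_le _ _) _.
rewrite !vnorm_scale !Rabs_mult !Rabs_inv (Rabs_minus_sym t).
have hiT' : / Rabs t' <= 2 * / Rabs t.
  rewrite -(Rinv_inv 2) -Rinv_mult; apply: Rinv_le_contravar; lra.
have hdelta : 0 <= delta by have := vnorm_ge0 (vsub v' v); lra.
have := hsmall delta; rewrite Rabs_pos_eq // => /(_ hd2) hlt.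
have hD1 := vnorm_ge0 (vsub v' v); have hD2 := Rabs_pos (t' - t).
have hiT'0 : 0 <= / Rabs t' by apply: Rlt_le; apply: Rinv_0_lt_compat; lra.
move: hlt hiT' hiT'0; set iT := / Rabs t; set iT' := / Rabs t' => hlt hiT' hiT'0.
have h1 : iT' * vnorm (vsub v' v) <= 2 * iT * delta.
  by apply: Rmult_le_compat; lra.
have h2 : Rabs (t' - t) * iT * iT' * vnorm v <= delta * iT * (2 * iT) * vnorm v.
  apply: Rmult_le_compat_r => //.
  by apply: Rmult_le_compat; [nra | lra | apply: Rmult_le_compat_r; lra | lra].
nra.
Qed.

Definition g_continuous_at n (f : gphi n -> R) (X : gphi n) : Prop :=
  forall eps, 0 < eps -> exists delta, 0 < delta /\
    forall Y : gphi n,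
      vnorm (vsub (fst Y) (fst X)) < delta -> Rabs (snd Y - snd X) < delta ->
      Rabs (f Y - f X) < eps.

Section ZetaOf.
Variables (n : nat) (phi : V n -> V n) (alpha : V n -> R) (c : W phi -> R).
Hypotheses (phi_lin : is_linear_map phi) (alpha_dual : is_dual alpha).

Lemma zeta_of_t0 v : zeta_of alpha c (v, 0) = alpha v.
Proof. by rewrite /zeta_of; case: Req_dec_T. Qed.

Lemma zeta_of_tneq0 v t : t <> 0 ->
  zeta_of alpha c (v, t) = c (Wof phi (vscale (/ t) v)) * t + alpha v.
Proof. by rewrite /zeta_of; case: Req_dec_T. Qed.

Lemma zeta_of_homogeneous v t : t <> 0 ->
  zeta_of alpha c (v, t) = t * (c (Wof phi (vscale (/ t) v)) + alpha (vscale (/ t) v)).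
Proof. by move=> ht; rewrite zeta_of_tneq0 // (proj2 alpha_dual); field. Qed.

Lemma zeta_of_ray (P : W phi) v t :
  phi v = vscale t (Wval P) -> zeta_of alpha c (v, t) = t * c P + alpha v.
Proof.
move=> hv; rewrite /zeta_of; case: Req_dec_T => [->|ht]; first ring.
have -> : Wof phi (vscale (/ t) v) = P.
  by apply: Wval_inj; rewrite /= (phi_vscale phi_lin) hv; vext; field.
ring.
Qed.

Lemma alpha_comb a b v w :
  alpha (vadd (vscale a v) (vscale b w)) = a * alpha v + b * alpha w.
Proof. by rewrite (proj1 alpha_dual) !(proj2 alpha_dual). Qed.

Lemma commuting_common_ray v w s t : vscale s (phi w) = vscale t (phi v) -> s <> 0 ->
  exists P : W phi, phi v = vscale s (Wval P) /\ phi w = vscale t (Wval P).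
Proof.
move=> hvw hs; exists (Wof phi (vscale (/ s) v)); rewrite /= (phi_vscale phi_lin); split.
- by vext; field.
- apply: functional_extensionality => j.
  have := congr1 (fun x => x j) hvw; rewrite /vscale => h.
  by apply: (Rmult_eq_reg_l s) => //; rewrite h; field.
Qed.

Lemma zeta_of_commuting (X Y : gphi n) a b : gbracket phi X Y = gzero n ->
  zeta_of alpha c (gadd (gscale a X) (gscale b Y)) =
  a * zeta_of alpha c X + b * zeta_of alpha c Y.
Proof.
case: X Y => v s [w t] hbr.
have hvw : vscale s (phi w) = vscale t (phi v).
  apply: functional_extensionality => j.
  by have := congr1 (fun X : gphi n => fst X j) hbr; rewrite /= /vsub /vscale /vzero; lra.
have [[-> ->]|[P [hv hw]]] : (s = 0 /\ t = 0) \/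
    exists P : W phi, phi v = vscale s (Wval P) /\ phi w = vscale t (Wval P).
  have [hs|hs] := Req_dec s 0; last by right; exact: commuting_common_ray.
  have [->|ht] := Req_dec t 0; first by left.
  by right; have [P [hw hv]] := commuting_common_ray (esym hvw) ht; exists P.
- rewrite /gadd /gscale; cbn [fst snd].
  by rewrite !Rmult_0_r Rplus_0_r !zeta_of_t0 alpha_comb.
- have hvw' : phi (vadd (vscale a v) (vscale b w)) = vscale (a * s + b * t) (Wval P).
    by rewrite (proj1 phi_lin) !(phi_vscale phi_lin) hv hw; vext; ring.
  rewrite /gadd /gscale; cbn [fst snd].
  by rewrite (zeta_of_ray hvw') (zeta_of_ray hv) (zeta_of_ray hw) alpha_comb; ring.
Qed.

(* Near [t = 0] the term [c(phi v / t) t] is controlled by sublinearity: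
   [|c w| <= e |w| + C] gives [|c(phi v / t) t| <= e |phi v| + C |t|]. *)
Lemma zeta_of_continuous_t0 v : is_Csl c -> g_continuous_at (zeta_of alpha c) (v, 0).
Proof.
move=> hc eps heps; have he3 : 0 < eps / 3 by lra.
have [L [hL hphi]] := phi_lipschitz phi_lin.
have hK : 0 <= L * (vnorm v + 1) by have := vnorm_ge0 v; nra.
have [e [he hsmall_e]] := small_enough hK he3.
have [C [hC hcw]] := Csl_affine_bound phi_lin hc he.
have [d1 [hd1 hsmall_t]] := small_enough hC he3.
have [d2 [hd2 halpha]] := dual_vcontinuous alpha_dual v he3.
exists (Rmin 1 (Rmin d1 d2)); split; first by apply: Rmin_glb_lt; [lra | exact: Rmin_glb_lt].
have hm1 := Rmin_l 1 (Rmin d1 d2); have hm2 := Rmin_r 1 (Rmin d1 d2).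
have hm3 := Rmin_l d1 d2; have hm4 := Rmin_r d1 d2.
move=> [v' t']; cbn [fst snd] => hv' ht'; rewrite Rminus_0_r in ht'; rewrite zeta_of_t0.
have hal := halpha v' (Rlt_le_trans _ _ _ hv' (Rle_trans _ _ _ hm2 hm4)).
have [->|ht'0] := Req_dec t' 0; first by rewrite zeta_of_t0; lra.
rewrite zeta_of_tneq0 //; set w := Wof phi (vscale (/ t') v').
have hcwt : Rabs (c w * t') <= e * vnorm (phi v') + C * Rabs t'.
  have := hcw w; rewrite /= (phi_vscale phi_lin) vnorm_scale Rabs_inv Rabs_mult => h.
  apply: Rle_trans (Rmult_le_compat_r _ _ _ (Rabs_pos t') h) (Req_le _ _ _).
  by field; apply: Rabs_no_R0.
have hphiv' : vnorm (phi v') <= L * (vnorm v + 1).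
  apply: Rle_trans (hphi v') (Rmult_le_compat_l _ _ _ hL _).
  by have := vnorm_le_sub v' v; lra.
have := hsmall_e e; rewrite Rabs_pos_eq; last lra.
move=> /(_ (Rle_refl _)) he'.
have := hsmall_t t' (Rlt_le _ _ (Rlt_le_trans _ _ _ ht' (Rle_trans _ _ _ hm2 hm3))).
have := Rabs_triang (c w * t') (alpha v' - alpha v).
have -> : c w * t' + (alpha v' - alpha v) = c w * t' + alpha v' - alpha v by ring.
have : e * vnorm (phi v') <= e * (L * (vnorm v + 1)) by apply: Rmult_le_compat_l; lra.
lra.
Qed.

Lemma zeta_of_continuous_tneq0 v t : W_continuous c -> t <> 0 ->
  g_continuous_at (zeta_of alpha c) (v, t).
Proof.
move=> hc ht eps heps; have he2 : 0 < eps / 2 by lra.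
pose Z x := c (Wof phi x) + alpha x.
have hZ : vcontinuous Z.
  exact: vcontinuous_plus (W_continuous_Wof phi_lin hc) (dual_vcontinuous alpha_dual).
set u := vscale (/ t) v.
have [e [he hsmall_e]] := small_enough (Rle_trans _ _ _ (Rabs_pos t) (Rlt_le _ _ (Rlt_n_Sn _))) he2.
have [eta [heta hZu]] := hZ u e he.
have [d1 [hd1 [hd1t hu]]] := vscale_inv_continuous v ht heta.
have [d2 [hd2 hsmall_t]] := small_enough (Rabs_pos (Z u)) he2.
exists (Rmin 1 (Rmin d1 d2)); split; first by apply: Rmin_glb_lt; [lra | exact: Rmin_glb_lt].
have hm1 := Rmin_l 1 (Rmin d1 d2); have hm2 := Rmin_r 1 (Rmin d1 d2).
have hm3 := Rmin_l d1 d2; have hm4 := Rmin_r d1 d2.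
move=> [v' t']; cbn [fst snd] => hv' ht'.
have ht'0 : t' <> 0.
  move=> e0; rewrite e0 Rminus_0_l Rabs_Ropp in ht'; have := Rabs_pos_lt _ ht; lra.
rewrite !zeta_of_homogeneous // -/u -/(Z u) -/(Z (vscale (/ t') v')).
have hZ' := hZu _ (hu v' t' (Rlt_le_trans _ _ _ hv' (Rle_trans _ _ _ hm2 hm3))
                      (Rlt_le_trans _ _ _ ht' (Rle_trans _ _ _ hm2 hm3))).
have ht'b : Rabs t' <= Rabs t + 1.
  have := Rabs_triang (t' - t) t; have -> : t' - t + t = t' by ring.
  lra.
have h1 := hsmall_e _ (Rlt_le _ _ hZ').
have h2 := hsmall_t _ (Rlt_le _ _ (Rlt_le_trans _ _ _ ht' (Rle_trans _ _ _ hm2 hm4))).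
have -> : t' * Z (vscale (/ t') v') - t * Z u =
          t' * (Z (vscale (/ t') v') - Z u) + Z u * (t' - t) by ring.
apply: Rle_lt_trans (Rabs_triang _ _) _; rewrite !Rabs_mult.
have : Rabs t' * Rabs (Z (vscale (/ t') v') - Z u) <=
       (Rabs t + 1) * Rabs (Z (vscale (/ t') v') - Z u).
  by apply: Rmult_le_compat_r => //; exact: Rabs_pos.
lra.
Qed.

Lemma zeta_of_LQS : is_Csl c -> is_LQS phi (zeta_of alpha c).
Proof.
move=> hc; split=> [[v t]|]; last exact: zeta_of_commuting.
have [->|ht] := Req_dec t 0; first exact: zeta_of_continuous_t0.
exact: zeta_of_continuous_tneq0 (proj1 hc) ht.
Qed.

End ZetaOf.

(* Compactness of the ball turns continuity at each [(x, 0)] into uniformity. *)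
Lemma g_continuous_uniform_t0 n (f : gphi n -> R) : g_continuous f ->
  forall M eps, 0 < eps -> exists delta, 0 < delta /\
    forall u tau, vnorm u <= M -> Rabs tau < delta -> Rabs (f (u, tau) - f (u, 0)) < eps.
Proof.
move=> hf M eps heps; have he2 : 0 < eps / 2 by lra.
have gauge : forall x, {d | 0 < d /\ forall Y : gphi n, vnorm (vsub (fst Y) x) < d ->
    Rabs (snd Y - 0) < d -> Rabs (f Y - f (x, 0)) < eps / 2}.
  by move=> x; apply: constructive_indefinite_description; exact: hf (x, 0) _ he2.
have hd x : 0 < sval (gauge x) by exact: proj1 (svalP (gauge x)).
have [s hs] := ball_gauge_cover M hd.
exists (list_min (fun x => sval (gauge x)) s); split=> [|u tau hu htau].
  exact: list_min_gt0.
have [x [hx hux]] := hs u hu.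
have hdx := list_min_le (fun x => sval (gauge x)) hx.
have := proj2 (svalP (gauge x)) (u, tau) hux ltac:(rewrite /= Rminus_0_r; lra).
have := proj2 (svalP (gauge x)) (u, 0) hux ltac:(rewrite /= Rminus_0_r Rabs_R0; exact: hd).
have := Rabs_triang (f (u, tau) - f (x, 0)) (- (f (u, 0) - f (x, 0))).
rewrite Rabs_Ropp.
have -> : f (u, tau) - f (x, 0) + - (f (u, 0) - f (x, 0)) = f (u, tau) - f (u, 0) by ring.
lra.
Qed.

Section Surjectivity.
Variables (n : nat) (phi : V n -> V n) (zeta : gphi n -> R).
Hypotheses (phi_lin : is_linear_map phi) (zeta_LQS : is_LQS phi zeta).

Lemma LQS_scale a X : zeta (gscale a X) = a * zeta X.
Proof.
case: X => v s.
have hXX : gbracket phi (v, s) (v, s) = gzero n.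
  by rewrite /gbracket /gzero /=; congr pair; vext; ring.
have := proj2 zeta_LQS _ _ a 0 hXX.
have -> : gadd (gscale a (v, s)) (gscale 0 (v, s)) = gscale a (v, s).
  by rewrite /gadd /gscale /=; congr pair; [vext | ]; ring.
by move=> ->; ring.
Qed.

Lemma LQS_add0 v w : zeta (vadd v w, 0) = zeta (v, 0) + zeta (w, 0).
Proof.
have hvw : gbracket phi (v, 0) (w, 0) = gzero n.
  by rewrite /gbracket /gzero /=; congr pair; vext; ring.
have := proj2 zeta_LQS _ _ 1 1 hvw.
have -> : gadd (gscale 1 (v, 0)) (gscale 1 (w, 0)) = (vadd v w, 0).
  by rewrite /gadd /gscale /=; congr pair; [vext | ]; ring.
by move=> ->; ring.
Qed.

Lemma LQS_add_kernel y k : phi k = vzero n -> zeta (vadd y k, 1) = zeta (y, 1) + zeta (k, 0).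
Proof.
move=> hk; have hyk : gbracket phi (y, 1) (k, 0) = gzero n.
  by rewrite /gbracket /gzero /= hk; congr pair; vext; ring.
have := proj2 zeta_LQS _ _ 1 1 hyk.
have -> : gadd (gscale 1 (y, 1)) (gscale 1 (k, 0)) = (vadd y k, 1).
  by rewrite /gadd /gscale /=; congr pair; [vext | ]; ring.
by move=> ->; ring.
Qed.

Definition LQS_dual (v : V n) : R := zeta (v, 0).

Definition LQS_profile (w : W phi) : R :=
  zeta (pinv_map phi (Wval w), 1) - zeta (pinv_map phi (Wval w), 0).

Lemma LQS_dual_is_dual : is_dual LQS_dual.
Proof.
split=> [v w|a v]; first exact: LQS_add0.
by rewrite /LQS_dual -LQS_scale /gscale /= Rmult_0_r.
Qed.

(* The profile does not depend on the chosen preimage: preimages differ by a kernel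
   vector [k], and [(k, 0)] commutes with everything. *)
Lemma LQS_profile_Wof x : LQS_profile (Wof phi x) = zeta (x, 1) - zeta (x, 0).
Proof.
set y := pinv_map phi (phi x); set k := vsub x y.
have hk : phi k = vzero n.
  by rewrite /k (phi_vsub phi_lin) phi_pinv_map //; vext; ring.
have hx : x = vadd y k by rewrite /k; vext; ring.
rewrite /LQS_profile /= -/y [in RHS]hx LQS_add_kernel // LQS_add0; ring.
Qed.

Lemma zeta_of_LQS_profile : zeta_of LQS_dual LQS_profile = zeta.
Proof.
apply: functional_extensionality => -[v t].
have [->|ht] := Req_dec t 0; first by rewrite zeta_of_t0.
rewrite zeta_of_tneq0 // LQS_profile_Wof /LQS_dual Rmult_minus_distr_r.
have hu b : zeta (vscale (/ t) v, b) * t = zeta (v, b * t).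
  by rewrite Rmult_comm -LQS_scale /gscale /=; congr (zeta (_, _)); [vext; field | ring].
by rewrite (hu 1) (hu 0) Rmult_1_l Rmult_0_l; ring.
Qed.

Lemma LQS_profile_continuous : W_continuous LQS_profile.
Proof.
move=> w eps heps; have he2 : 0 < eps / 2 by lra.
have [K [hK hpinv]] := pinv_map_lipschitz phi.
set x := pinv_map phi (Wval w).
have [d1 [hd1 h1]] := proj1 zeta_LQS (x, 1) _ he2.
have [d0 [hd0 h0]] := proj1 zeta_LQS (x, 0) _ he2.
have [d [hd hsmall]] := small_enough hK (Rmin_glb_lt _ _ _ hd1 hd0).
exists d; split=> // w' hw'.
set x' := pinv_map phi (Wval w').
have hx' : vnorm (vsub x' x) < Rmin d1 d0.
  rewrite /x /x' -pinv_map_vsub; apply: Rle_lt_trans (hpinv _) _.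
  rewrite -(Rabs_pos_eq (vnorm (vsub _ _)) (vnorm_ge0 _)); apply: hsmall.
  by rewrite Rabs_pos_eq; [lra | exact: vnorm_ge0].
have := h1 (x', 1) (Rlt_le_trans _ _ _ hx' (Rmin_l _ _)) ltac:(rewrite /= Rminus_diag Rabs_R0 //).
have := h0 (x', 0) (Rlt_le_trans _ _ _ hx' (Rmin_r _ _)) ltac:(rewrite /= Rminus_diag Rabs_R0 //).
rewrite /LQS_profile -/x -/x' /=.
have := Rabs_triang (zeta (x', 1) - zeta (x, 1)) (- (zeta (x', 0) - zeta (x, 0))).
rewrite Rabs_Ropp.
have -> : zeta (x', 1) - zeta (x, 1) + - (zeta (x', 0) - zeta (x, 0)) =
          zeta (x', 1) - zeta (x', 0) - (zeta (x, 1) - zeta (x, 0)) by ring.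
lra.
Qed.

(* With [S = |w|] and [u = pinv w / S], [c w = S (zeta(u, 1/S) - zeta(u, 0))] and [u]
   stays in a fixed ball, so uniform continuity at [t = 0] gives sublinearity. *)
Lemma LQS_profile_sublinear : W_sublinear LQS_profile.
Proof.
move=> eps heps; have [K [hK hpinv]] := pinv_map_lipschitz phi.
have [d [hd hunif]] := g_continuous_uniform_t0 (proj1 zeta_LQS) K heps.
exists (/ d) => w hw; set S := vnorm (Wval w) in hw *.
have hS : 0 < S by have := Rinv_0_lt_compat _ hd; lra.
set x := pinv_map phi (Wval w); set u := vscale (/ S) x.
have hu : vnorm u <= K.
  rewrite /u vnorm_scale Rabs_pos_eq; last exact: Rlt_le (Rinv_0_lt_compat _ hS).
  apply: (Rmult_le_reg_l S) => //; rewrite -Rmult_assoc Rinv_r; last lra.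
  by rewrite Rmult_1_l Rmult_comm; exact: hpinv.
have htau : Rabs (/ S) < d.
  rewrite Rabs_pos_eq; last exact: Rlt_le (Rinv_0_lt_compat _ hS).
  by rewrite -(Rinv_inv d); apply: Rinv_lt_contravar => //; apply: Rmult_lt_0_compat => //; exact: Rinv_0_lt_compat.
have hx b : zeta (x, b) = S * zeta (u, b / S).
  by rewrite -LQS_scale /gscale /=; congr (zeta (_, _)); [rewrite /u; vext | ]; field; lra.
rewrite /LQS_profile -/x (hx 1) (hx 0) /Rdiv Rmult_0_l Rmult_1_l -Rmult_minus_distr_l.
rewrite Rabs_mult Rabs_pos_eq; last lra.
by rewrite Rmult_comm; apply: Rmult_le_compat_r; [lra | exact: Rlt_le (hunif u _ hu htau)].
Qed.

Lemma LQS_profile_Csl : is_Csl LQS_profile.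
Proof. split; [exact: LQS_profile_continuous | exact: LQS_profile_sublinear]. Qed.

End Surjectivity.

Lemma zeta_of_lin n (phi : V n -> V n) a b alpha1 alpha2 (c1 c2 : W phi -> R) :
  zeta_of (fun v => a * alpha1 v + b * alpha2 v) (fun w => a * c1 w + b * c2 w)
  = (fun X => a * zeta_of alpha1 c1 X + b * zeta_of alpha2 c2 X).
Proof.
apply: functional_extensionality => -[v t]; rewrite /zeta_of.
by case: Req_dec_T => _; ring.
Qed.

Lemma zeta_of_inj n (phi : V n -> V n) alpha1 alpha2 (c1 c2 : W phi -> R) :
  zeta_of alpha1 c1 = zeta_of alpha2 c2 -> alpha1 = alpha2 /\ c1 = c2.
Proof.
move=> h.
have ha : alpha1 = alpha2.
  by apply: functional_extensionality => v; have := congr1 (fun f => f (v, 0)) h;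
    rewrite !zeta_of_t0.
split=> //; apply: functional_extensionality => w.
case: w => x [v hv]; subst x.
have := congr1 (fun f => f (v, 1)) h; rewrite !zeta_of_tneq0 ?ha; try lra.
have -> : Wof phi (vscale (/ 1) v) = exist _ (phi v) (ex_intro _ v erefl).
  by apply: Wval_inj; congr phi; vext; field.
lra.
Qed.

Definition bump (r x : R) : R := Rmax 0 (1 - Rabs (x - r)).

Lemma bump_lipschitz r x y : Rabs (bump r x - bump r y) <= Rabs (x - y).
Proof. by rewrite /bump /Rmax; repeat case: Rle_dec; split_Rabs; lra. Qed.

Lemma bump_le1 r x : Rabs (bump r x) <= 1.
Proof. by rewrite /bump /Rmax; repeat case: Rle_dec; split_Rabs; lra. Qed.

Lemma bump_center r : bump r r = 1.
Proof. by rewrite /bump Rminus_diag Rabs_R0 /Rmax; case: Rle_dec; lra. Qed.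

Lemma bump_far r x : 1 <= Rabs (x - r) -> bump r x = 0.
Proof. by rewrite /bump /Rmax => h; case: Rle_dec; lra. Qed.

Lemma bump_vnorm_Csl n (phi : V n -> V n) r : is_Csl (fun w : W phi => bump r (vnorm (Wval w))).
Proof.
split=> [w eps heps|eps heps].
- exists eps; split=> // w' hw'.
  exact: Rle_lt_trans (bump_lipschitz _ _ _) (Rle_lt_trans _ _ _ (vnorm_dist_le _ _) hw').
- exists (/ eps) => w hw; apply: Rle_trans (bump_le1 _ _) _.
  have -> : 1 = eps * / eps by field; lra.
  by apply: Rmult_le_compat_l; lra.
Qed.

Lemma INR_dist_ge1 k j : k <> j -> 1 <= Rabs (INR k - INR j).
Proof.
move=> hkj; have [hlt|hlt] : (k < j)%coq_nat \/ (j < k)%coq_nat by lia.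
- by have := le_INR _ _ hlt; rewrite S_INR => h; split_Rabs; lra.
- by have := le_INR _ _ hlt; rewrite S_INR => h; split_Rabs; lra.
Qed.

(* The quasi-states [zeta_{0, b_k}] with [b_k] a bump of radius 1 centred on the
   sphere [|w| = k + 1] of [W] take the value [delta_jk] at a point of that sphere. *)
Lemma LQS_linearly_independent n (phi : V n -> V n) :
  is_linear_map phi -> (exists v, phi v <> vzero n) ->
  forall m : nat, exists zs : 'I_m -> gphi n -> R,
    (forall k, is_LQS phi (zs k)) /\
    forall a : 'I_m -> R,
      (forall X, \big[Rplus/0]_(k < m) (a k * zs k X) = 0) -> forall k, a k = 0.
Proof.
move=> hlin [v0 hv0] m.
have hdual0 : is_dual (fun _ : V n => 0) by split=> *; ring.
pose radius (k : 'I_m) := INR k + 1.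
pose zs k := zeta_of (fun _ => 0) (fun w : W phi => bump (radius k) (vnorm (Wval w))).
exists zs; split=> [k|a ha k]; first exact: zeta_of_LQS hlin hdual0 (bump_vnorm_Csl _ _).
have hN := vnorm_gt0 hv0.
have hr : 0 < radius k by have := pos_INR k; rewrite /radius; lra.
pose X : gphi n := (vscale (radius k / vnorm (phi v0)) v0, 1).
have hzs j : zs j X = if j == k then 1 else 0.
  rewrite /zs zeta_of_tneq0; last lra.
  rewrite /= Rinv_1 !(phi_vscale hlin) !vnorm_scale Rabs_R1 Rmult_1_l.
  rewrite Rabs_pos_eq; last exact: Rlt_le (Rdiv_lt_0_compat _ _ hr hN).
  have -> : radius k / vnorm (phi v0) * vnorm (phi v0) = radius k by field; lra.
  case: eqP => [->|hjk]; first by rewrite bump_center; ring.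
  rewrite bump_far; first ring.
  have -> : radius k - radius j = INR k - INR j by rewrite /radius; ring.
  by apply: INR_dist_ge1 => e; apply: hjk; apply: val_inj.
have := ha X; rewrite (bigD1 k) // big1 => [|j /negbTE hjk]; last by rewrite hzs hjk; ring.
by rewrite hzs eqxx => h; have : a k * 1 + 0 = 0 := h; lra.
Qed.

Theorem mainTheorem10 (n : nat) (phi : V n -> V n)
    (hlin : is_linear_map phi) (hnz : exists v, phi v <> vzero n) :
  (forall alpha (c : W phi -> R), is_dual alpha -> is_Csl c -> is_LQS phi (zeta_of alpha c)) /\
  (forall (a b : R) alpha1 alpha2 (c1 c2 : W phi -> R),
     zeta_of (fun v => a * alpha1 v + b * alpha2 v) (fun w => a * c1 w + b * c2 w)
     = (fun X => a * zeta_of alpha1 c1 X + b * zeta_of alpha2 c2 X)) /\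
  (forall alpha1 alpha2 (c1 c2 : W phi -> R),
     is_dual alpha1 -> is_Csl c1 -> is_dual alpha2 -> is_Csl c2 ->
     zeta_of alpha1 c1 = zeta_of alpha2 c2 -> alpha1 = alpha2 /\ c1 = c2) /\
  (forall zeta, is_LQS phi zeta ->
     exists alpha (c : W phi -> R), is_dual alpha /\ is_Csl c /\ zeta_of alpha c = zeta) /\
  (forall m : nat, exists zs : 'I_m -> gphi n -> R,
     (forall k, is_LQS phi (zs k)) /\
     forall a : 'I_m -> R,
       (forall X, \big[Rplus/0%R]_(k < m) (a k * zs k X) = 0) ->
       forall k, a k = 0).
Proof.
split=> [alpha c hdual hc|]; first exact: zeta_of_LQS.
split=> [a b alpha1 alpha2 c1 c2|]; first exact: zeta_of_lin.
split=> [alpha1 alpha2 c1 c2 _ _ _ _|]; first exact: zeta_of_inj.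
split=> [zeta hzeta|]; last exact: LQS_linearly_independent.
exists (LQS_dual zeta), (LQS_profile zeta).
split; first exact: LQS_dual_is_dual hzeta.
split; [exact: LQS_profile_Csl hzeta | exact: zeta_of_LQS_profile hlin hzeta].
Qed.
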